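(* The following five $9$-dimensional complex Lie algebras are mutually non-isomorphic. Each has basis $\mathbf x_1,\dots,\mathbf x_7,\mathbf y_1,\mathbf y_2$, with the listed nonzero brackets (together with those obtained by antisymmetry) and all other brackets of basis elements equal to zero: (1) $N^{9,2}_1$: $[\mathbf x_1,\mathbf x_2]=[\mathbf x_4,\mathbf x_5]=[\mathbf x_6,\mathbf x_7]=\mathbf y_1$, $[\mathbf x_3,\mathbf x_7]=\mathbf y_2$; (2) $N^{9,2}_2$: $[\mathbf x_2,\mathbf x_7]=[\mathbf x_4,\mathbf x_5]=\mathbf y_1$, $[\mathbf x_1,\mathbf x_3]=[\mathbf x_6,\mathbf x_7]=\mathbf y_2$; (3) $N^{9,2}_3$: $[\mathbf x_1,\mathbf x_2]=[\mathbf x_3,\mathbf x_7]=[\mathbf x_5,\mathbf x_6]=\mathbf y_1$, $[\mathbf x_4,\mathbf x_6]=[\mathbf x_5,\mathbf x_7]=\mathbf y_2$; (4) $N^{9,2}_4$: $[\mathbf x_7,\mathbf x_2]=[\mathbf x_4,\mathbf x_5]=[\mathbf x_6,\mathbf x_1]=\mathbf y_1$, $[\mathbf x_7,\mathbf x_3]=[\mathbf x_5,\mathbf x_6]=\mathbf y_2$; (5) $N^{9,2}_5$: $[\mathbf x_1,\mathbf x_7]=[\mathbf x_3,\mathbf x_4]=[\mathbf x_5,\mathbf x_6]=\mathbf y_1$, $[\mathbf x_7,\mathbf x_3]=[\mathbf x_4,\mathbf x_5]=[\mathbf x_6,\mathbf x_2]=\mathbf y_2$. *)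

From HB Require Import structures.
From mathcomp Require Import all_boot all_order all_algebra.
From mathcomp Require Import complex.
From mathcomp Require Import Rstruct.
Set Implicit Arguments. Unset Strict Implicit. Unset Printing Implicit Defensive.
Import Order.TTheory GRing.Theory Num.Theory.
Local Open Scope ring_scope.

Definition C : Type := complex Rdefinitions.R.

(* A 9-dimensional algebra is given by a table of nonzero brackets of basis elements:
   a triple (a, b, c) means [e_a, e_b] = e_c (basis indices 1..9, with
   e_1..e_7 = x_1..x_7, e_8 = y_1, e_9 = y_2).  Brackets obtained by antisymmetry are
   added automatically; all other brackets of basis elements are zero. *)
Definition table := seq (nat * nat * nat).

Definition bvec (k : nat) : 'rV[C]_9 := delta_mx 0 (inord k.-1).

Definition bbr (s : table) (i j : 'I_9) : 'rV[C]_9 :=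
  \sum_(t <- s)
     ((((t.1.1 == i.+1) && (t.1.2 == j.+1))%:R
       - ((t.1.2 == i.+1) && (t.1.1 == j.+1))%:R) *: bvec t.2).

Definition bracket (s : table) (u v : 'rV[C]_9) : 'rV[C]_9 :=
  \sum_(i < 9) \sum_(j < 9) (u 0 i * v 0 j) *: bbr s i j.

Definition isomorphic (s1 s2 : table) : Prop :=
  exists A : 'M[C]_9, A \in unitmx /\
    forall u v : 'rV[C]_9, bracket s2 (u *m A) (v *m A) = bracket s1 u v *m A.

Definition y1 := 8%N.
Definition y2 := 9%N.

Definition N1 : table :=
  [:: (1,2,y1); (4,5,y1); (6,7,y1); (3,7,y2)]%N.
Definition N2 : table :=
  [:: (2,7,y1); (4,5,y1); (1,3,y2); (6,7,y2)]%N.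
Definition N3 : table :=
  [:: (1,2,y1); (3,7,y1); (5,6,y1); (4,6,y2); (5,7,y2)]%N.
Definition N4 : table :=
  [:: (7,2,y1); (4,5,y1); (6,1,y1); (7,3,y2); (5,6,y2)]%N.
Definition N5 : table :=
  [:: (1,7,y1); (3,4,y1); (5,6,y1); (7,3,y2); (4,5,y2); (6,2,y2)]%N.

Definition N92 (k : 'I_5) : table :=
  match val k with
  | 0 => N1 | 1 => N2 | 2 => N3 | 3 => N4 | _ => N5
  end%N.

(** Every linear functional c on the algebra gives the skew form
    B_c(u, v) = c([u, v]); when all brackets lie in span(y1, y2), B_c is
    c(y1) D1 + c(y2) D2, a member of the pencil spanned by the two structure
    forms D1, D2 (here [bform s c], [struct_mx s y1], [struct_mx s y2] and
    [pencil s a b]).  An isomorphism A turns B_(Ac) into the congruent form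
    A B_c A^T, so the rank behaviour of the pencil is an isomorphism invariant.
    Explicit triangular minors give lower bounds on the ranks.  N1 has a
    member of rank 2 and the other algebras do not; N2, N3, N4 have a member
    of rank 4 while all nonzero members of N5 have rank 6; in N2 the
    functionals of form rank at most 4 span the dual space, whereas in N3 and
    N4 they all vanish on y1; finally, the radical of the rank-4 member is
    isotropic for the whole pencil in N4 but not in N3. *)
From mathcomp Require Import all_boot all_order all_algebra ring complex Rstruct.
Set Implicit Arguments. Unset Strict Implicit. Unset Printing Implicit Defensive.
Import Order.TTheory GRing.Theory Num.Theory.
Local Open Scope ring_scope.

Lemma mxrank_trig_minor (F : fieldType) m n r (f : 'I_r -> 'I_m) (h : 'I_r -> 'I_n)
    (M : 'M[F]_(m, n)) :
    (forall i j : 'I_r, (i < j)%N -> M (f i) (h j) = 0) ->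
    \prod_(i < r) M (f i) (h i) != 0 ->
  (r <= \rank M)%N.
Proof.
move=> trig_fhM diag_neq0.
have sub_le : (\rank (mxsub f h M) <= \rank M)%N.
  have -> : mxsub f h M = rowsub f 1%:M *m M *m colsub h 1%:M.
    by rewrite mul_rowsub_mx mul1mx mulmx_colsub mulmx1 mxsubcr.
  exact: leq_trans (mxrankM_maxl _ _) (mxrankM_maxr _ _).
have trig : is_trig_mx (mxsub f h M) by apply/is_trig_mxP => i j /trig_fhM; rewrite mxE.
apply: leq_trans sub_le; rewrite mxrank_unit // unitmxE (det_trig trig) unitfE.
by under eq_bigr do rewrite mxE.
Qed.

Lemma sqr_eq_expf_neq0 (F : idomainType) (x y : F) k :
  x ^+ 2 = y ^+ k -> y != 0 -> x != 0.
Proof.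
move=> sqr_x; apply: contraNneq => x0.
by move: sqr_x; rewrite x0 expr0n /= => /esym/eqP; rewrite expf_eq0 => /andP[].
Qed.

Lemma unitmx_row_neq0 (F : fieldType) n (P : 'M[F]_n) i :
  P \in unitmx -> exists j, P i j != 0.
Proof.
move=> unitP; apply/existsP; apply: contraLR unitP; rewrite negb_exists => /forallP P_i0.
rewrite unitmxE unitfE negbK (expand_det_row _ i) big1 // => j _.
by move/negbNE/eqP: (P_i0 j) => ->; rewrite mul0r.
Qed.

Lemma mxrank_congr_unitmx (F : fieldType) n (A M : 'M[F]_n) :
  A \in unitmx -> \rank (A *m M *m A^T) = \rank M.
Proof.
move=> unitA; rewrite mxrankMfree ?row_free_unit ?unitmx_tr //.
by rewrite -mxrank_tr trmx_mul mxrankMfree ?row_free_unit ?unitmx_tr // mxrank_tr.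
Qed.

(* Basis indices are 1-based, as in [table]. *)
Definition ecol (a : nat) : 'cV[C]_9 := \col_(i < 9) (a == i.+1)%:R.
Definition xcoord (u : 'rV[C]_9) (a : nat) : C := (u *m ecol a) 0 0.
Definition wedge (a b : nat) : 'M[C]_9 :=
  \matrix_(i, j) ((a == i.+1)%:R * (b == j.+1)%:R - (b == i.+1)%:R * (a == j.+1)%:R).
Definition struct_mx (s : table) (k : nat) : 'M[C]_9 :=
  \sum_(t <- s | t.2 == k) wedge t.1.1 t.1.2.
Definition pencil (s : table) (a b : C) : 'M[C]_9 :=
  a *: struct_mx s y1 + b *: struct_mx s y2.
Definition bform (s : table) (c : 'cV[C]_9) : 'M[C]_9 :=
  \matrix_(i, j) (bbr s i j *m c) 0 0.
Definition brackets_in_y (s : table) : bool := all (fun t => (t.2 == y1) || (t.2 == y2)) s.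

(* The index in 'I_9 of the basis vector e_k, k = 1..9. *)
Notation "''x' k" := (@Ordinal 9 k.-1 isT) (at level 0, k at level 0).

Definition iy1 : 'I_9 := 'x y1.
Definition iy2 : 'I_9 := 'x y2.

Lemma wedgeE a b i j :
  wedge a b i j = (a == i.+1)%:R * (b == j.+1)%:R - (b == i.+1)%:R * (a == j.+1)%:R.
Proof. exact: mxE. Qed.

Lemma wedge_dyadE a b : wedge a b = ecol a *m (ecol b)^T - ecol b *m (ecol a)^T.
Proof. by apply/matrixP => i j; rewrite !mxE !big_ord1 !mxE. Qed.

Lemma mxrank_wedge a b : (\rank (wedge a b) <= 2)%N.
Proof.
have rank_dyad x y : (\rank (ecol x *m (ecol y)^T) <= 1)%N.
  exact: leq_trans (mxrankM_maxl _ _) (rank_leq_col _).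
rewrite wedge_dyadE; apply: leq_trans (mxrank_add _ _) _; rewrite -scaleN1r.
exact: leq_add (rank_dyad _ _) (leq_trans (mxrank_scale _ _) (rank_dyad _ _)).
Qed.

Lemma row_wedgeE (u : 'rV[C]_9) a b j :
  (u *m wedge a b) 0 j = xcoord u a * (b == j.+1)%:R - xcoord u b * (a == j.+1)%:R.
Proof.
rewrite wedge_dyadE mulmxBr !mulmxA (mx11_scalar (u *m ecol a)) (mx11_scalar (u *m ecol b)).
by rewrite !mul_scalar_mx -/(xcoord u a) -/(xcoord u b) !mxE.
Qed.

Lemma wedge_formE (u v : 'rV[C]_9) a b :
  (u *m wedge a b *m v^T) 0 0 = xcoord u a * xcoord v b - xcoord u b * xcoord v a.
Proof.
rewrite wedge_dyadE mulmxBr mulmxBl !mulmxA.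
rewrite (mx11_scalar (u *m ecol a)) (mx11_scalar (u *m ecol b)).
by rewrite !mul_scalar_mx -!scalemxAl -!trmx_mul /xcoord !mxE.
Qed.

Lemma xcoord_delta (k : 'I_9) a : xcoord (delta_mx 0 k) a = (a == k.+1)%:R.
Proof. by rewrite /xcoord -rowE !mxE. Qed.

Lemma struct_mxE s k i j :
  struct_mx s k i j = \sum_(t <- [seq t <- s | t.2 == k]) wedge t.1.1 t.1.2 i j.
Proof. by rewrite summxE big_filter. Qed.

Lemma row_struct_mxE (u : 'rV[C]_9) s k j : (u *m struct_mx s k) 0 j =
  \sum_(t <- [seq t <- s | t.2 == k])
     (xcoord u t.1.1 * (t.1.2 == j.+1)%:R - xcoord u t.1.2 * (t.1.1 == j.+1)%:R).
Proof.
rewrite mulmx_sumr summxE big_filter.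
by apply: eq_bigr => t _; rewrite row_wedgeE.
Qed.

Lemma struct_formE (u v : 'rV[C]_9) s k : (u *m struct_mx s k *m v^T) 0 0 =
  \sum_(t <- [seq t <- s | t.2 == k])
     (xcoord u t.1.1 * xcoord v t.1.2 - xcoord u t.1.2 * xcoord v t.1.1).
Proof.
rewrite mulmx_sumr mulmx_suml summxE big_filter.
by apply: eq_bigr => t _; rewrite wedge_formE.
Qed.

Lemma mxrank_struct_mx s k :
  (\rank (struct_mx s k) <= 2 * count (fun t => t.2 == k) s)%N.
Proof.
rewrite /struct_mx; elim: s => [|t s IH]; first by rewrite big_nil mxrank0.
rewrite big_cons /=; case: (t.2 == k) => //=.
rewrite mulnDr muln1; exact: leq_trans (mxrank_add _ _) (leq_add (mxrank_wedge _ _) IH).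
Qed.

Lemma pencilE s a b i j :
  pencil s a b i j = a * struct_mx s y1 i j + b * struct_mx s y2 i j.
Proof. by rewrite !mxE. Qed.

Lemma mxrank_pencil_y1_le s a :
  (\rank (pencil s a 0%R) <= 2 * count (fun t => t.2 == y1) s)%N.
Proof.
rewrite /pencil scale0r addr0; exact: leq_trans (mxrank_scale _ _) (mxrank_struct_mx _ _).
Qed.

Lemma mxrank_pencil_y2_le s b :
  (\rank (pencil s 0%R b) <= 2 * count (fun t => t.2 == y2) s)%N.
Proof.
rewrite /pencil scale0r add0r; exact: leq_trans (mxrank_scale _ _) (mxrank_struct_mx _ _).
Qed.

Lemma bracket_bform s u v c : (bracket s u v *m c) 0 0 = (u *m bform s c *m v^T) 0 0.
Proof.
rewrite /bracket mulmx_suml summxE mxE.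
under eq_bigr => i _ do rewrite mulmx_suml summxE.
under [RHS]eq_bigr => j _ do rewrite !mxE big_distrl.
rewrite [RHS]exchange_big /=; apply: eq_bigr => i _; apply: eq_bigr => j _.
by rewrite -scalemxAl !mxE mulrAC.
Qed.

Lemma bform_wedge s c :
  bform s c = \sum_(t <- s) (bvec t.2 *m c) 0 0 *: wedge t.1.1 t.1.2.
Proof.
apply/matrixP => i j; rewrite mxE summxE /bbr mulmx_suml summxE.
by apply: eq_bigr => t _; rewrite -scalemxAl !mxE -!mulnb !natrM mulrC.
Qed.

Lemma bform_pencil s c : brackets_in_y s -> bform s c = pencil s (c iy1 0) (c iy2 0).
Proof.
have bvecE (i : 'I_9) : (bvec i.+1 *m c) 0 0 = c i 0 by rewrite -rowE mxE inord_val.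
rewrite bform_wedge /pencil /struct_mx; elim: s => [|t s IH] /=.
  by rewrite !big_nil !scaler0 addr0.
case/andP => /orP [] /eqP t2 /IH {}IH; rewrite !big_cons IH t2 /=.
  by rewrite (bvecE iy1) [in RHS]scalerDr addrA.
by rewrite (bvecE iy2) [in RHS]scalerDr addrCA.
Qed.

Lemma bform_ecol_y1 s : brackets_in_y s -> bform s (ecol y1) = pencil s 1 0.
Proof. by move=> s_y; rewrite bform_pencil // !mxE. Qed.

Lemma bform_ecol_y2 s : brackets_in_y s -> bform s (ecol y2) = pencil s 0 1.
Proof. by move=> s_y; rewrite bform_pencil // !mxE. Qed.

Lemma bform_iso s1 s2 (A : 'M[C]_9) c :
    (forall u v, bracket s2 (u *m A) (v *m A) = bracket s1 u v *m A) ->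
  A *m bform s2 c *m A^T = bform s1 (A *m c).
Proof.
move=> A_hom; apply/matrixP => i j.
have entry (M : 'M[C]_9) :
    M i j = ((delta_mx 0 i : 'rV_9) *m M *m (delta_mx 0 j : 'rV_9)^T) 0 0.
  by rewrite -rowE trmx_delta -colE !mxE.
rewrite entry [RHS]entry -bracket_bform (mulmxA (bracket s1 _ _)) -A_hom bracket_bform.
by rewrite trmx_mul !mulmxA.
Qed.

Lemma mxrank_bform_iso s1 s2 (A : 'M[C]_9) c :
    A \in unitmx -> (forall u v, bracket s2 (u *m A) (v *m A) = bracket s1 u v *m A) ->
  \rank (bform s1 (A *m c)) = \rank (bform s2 c).
Proof. by move=> unitA A_hom; rewrite -(bform_iso c A_hom) mxrank_congr_unitmx. Qed.

Lemma isomorphic_sym s1 s2 : isomorphic s1 s2 -> isomorphic s2 s1.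
Proof.
move=> [A [unitA A_hom]]; exists (invmx A); split; first by rewrite unitmx_inv.
move=> u v; have := A_hom (u *m invmx A) (v *m invmx A).
by rewrite !mulmxKV // => ->; rewrite mulmxK.
Qed.

Definition iso_invariant (P : table -> Prop) :=
  forall s1 s2, isomorphic s1 s2 -> P s2 -> P s1.

Lemma not_isomorphic_by P s1 s2 : iso_invariant P -> P s1 -> ~ P s2 -> ~ isomorphic s1 s2.
Proof. by move=> invP Ps1 notPs2 /isomorphic_sym/invP/(_ Ps1). Qed.

Definition has_form_rank (s : table) (r : nat) : Prop := exists c, \rank (bform s c) = r.

Lemma has_form_rank_invariant r : iso_invariant (has_form_rank^~ r).
Proof.
move=> s1 s2 [A [unitA A_hom]] [c rk]; exists (A *m c).
by rewrite (mxrank_bform_iso c unitA A_hom).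
Qed.

Lemma has_form_rank_y2 s r : brackets_in_y s ->
    (2 * count (fun t => t.2 == y2) s <= r)%N -> (r <= \rank (pencil s 0%R 1%R))%N ->
  has_form_rank s r.
Proof.
move=> s_y ub lb; exists (ecol y2); apply/eqP.
by rewrite eqn_leq bform_ecol_y2 // lb andbT (leq_trans (mxrank_pencil_y2_le _ _) ub).
Qed.

Definition low_rank_span (s : table) (r : nat) : Prop :=
  exists2 P : 'M[C]_9, P \in unitmx & forall k, (\rank (bform s (col k P)) <= r)%N.

Lemma low_rank_span_invariant r : iso_invariant (low_rank_span^~ r).
Proof.
move=> s1 s2 [A [unitA A_hom]] [P unitP rkP]; exists (A *m P).
  by rewrite unitmx_mul unitA.
by move=> k; rewrite colE -mulmxA -colE (mxrank_bform_iso _ unitA A_hom).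
Qed.

Lemma low_rank_span_basis s r : brackets_in_y s ->
    (2 * count (fun t => t.2 == y1) s <= r)%N ->
    (2 * count (fun t => t.2 == y2) s <= r)%N ->
  low_rank_span s r.
Proof.
move=> s_y le1 le2; exists 1%:M => [|k]; first exact: unitmx1.
rewrite bform_pencil // !mxE.
have [<-|_] := eqVneq iy1 k; first exact: leq_trans (mxrank_pencil_y1_le _ _) le1.
have [_|_] := eqVneq iy2 k; first exact: leq_trans (mxrank_pencil_y2_le _ _) le2.
by rewrite /pencil /= !mulr0n !scale0r addr0 mxrank0.
Qed.

Definition isotropic_radicals (s : table) (r : nat) : Prop :=
  forall c c' (u v : 'rV[C]_9),
    \rank (bform s c') = r -> u *m bform s c' = 0 -> v *m bform s c' = 0 ->
  (u *m bform s c *m v^T) 0 0 = 0.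

Lemma isotropic_radicals_invariant r : iso_invariant (isotropic_radicals^~ r).
Proof.
move=> s1 s2 [A [unitA A_hom]] iso2 c c' u v.
have conj d : bform s1 d = A *m bform s2 (invmx A *m d) *m A^T.
  by rewrite (bform_iso _ A_hom) mulKVmx.
have radical w : w *m bform s1 c' = 0 -> (w *m A) *m bform s2 (invmx A *m c') = 0.
  rewrite conj => /(congr1 (mulmx^~ (invmx A^T))).
  by rewrite !mulmxA mulmxK ?unitmx_tr // mul0mx.
move=> rk /radical u0 /radical v0.
have {}rk : \rank (bform s2 (invmx A *m c')) = r.
  by rewrite -(mxrank_bform_iso _ unitA A_hom) mulKVmx.
have -> : u *m bform s1 c *m v^T = (u *m A) *m bform s2 (invmx A *m c) *m (v *m A)^T.
  by rewrite conj trmx_mul !mulmxA.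
exact: iso2 rk u0 v0.
Qed.

Section PencilRanks.

Variables (s : table) (k1 k2 : nat).
Hypothesis s_y : brackets_in_y s.
Hypothesis rank_y1 : forall a b : C, a != 0 -> (k1 <= \rank (pencil s a b))%N.
Hypothesis rank_y2 : forall a b : C, b != 0 -> (k2 <= \rank (pencil s a b))%N.

Lemma mxrank_bform_lt_y1_eq0 c r : \rank (bform s c) = r -> (r < k1)%N -> c iy1 0 = 0.
Proof.
rewrite bform_pencil // => <-; apply: contraTeq => /(rank_y1 (c iy2 0)).
by rewrite -leqNgt.
Qed.

Lemma mxrank_bform_lt_eq0 c r : \rank (bform s c) = r -> (r < minn k1 k2)%N -> r = 0%N.
Proof.
move=> rk; rewrite leq_min => /andP[lt_r1 lt_r2].
have a0 := mxrank_bform_lt_y1_eq0 rk lt_r1.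
move: rk; rewrite bform_pencil // a0.
have [->|/(rank_y2 0)] := eqVneq (c iy2 0) 0.
  by rewrite /pencil !scale0r addr0 mxrank0.
by move=> le_k2 rk; move: lt_r2; rewrite -rk ltnNge le_k2.
Qed.

Lemma not_has_form_rank r : (0 < r < minn k1 k2)%N -> ~ has_form_rank s r.
Proof.
by case/andP => r_gt0 lt_r [c /mxrank_bform_lt_eq0 /(_ lt_r) r0]; rewrite r0 in r_gt0.
Qed.

Lemma not_low_rank_span r : (r < k1)%N -> ~ low_rank_span s r.
Proof.
move=> lt_r [P unitP rkP]; have [k] := unitmx_row_neq0 iy1 unitP.
have := mxrank_bform_lt_y1_eq0 (erefl _) (leq_ltn_trans (rkP k) lt_r).
by rewrite mxE => ->; rewrite eqxx.
Qed.

Lemma isotropic_radicals_of r : (0 < r < k1)%N ->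
    (forall u v : 'rV[C]_9, u *m struct_mx s y2 = 0 -> v *m struct_mx s y2 = 0 ->
       (u *m struct_mx s y1 *m v^T) 0 0 = 0) ->
  isotropic_radicals s r.
Proof.
case/andP => r_gt0 lt_r isotropic_y1 c c' u v rk.
have a0 := mxrank_bform_lt_y1_eq0 rk lt_r.
move: rk; rewrite !bform_pencil // a0 /pencil scale0r add0r.
have [->|b_neq0] := eqVneq (c' iy2 0) 0.
  by rewrite scale0r mxrank0 => r0; rewrite -r0 in r_gt0.
have radical w : w *m (c' iy2 0 *: struct_mx s y2) = 0 -> w *m struct_mx s y2 = 0.
  by move/eqP; rewrite -scalemxAr scaler_eq0 (negPf b_neq0) => /eqP.
move=> _ /radical u0 /radical v0.
rewrite mulmxDr -!scalemxAr u0 scaler0 addr0 -scalemxAl mxE.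
by rewrite isotropic_y1 ?mulr0.
Qed.

End PencilRanks.

Ltac nat_cases m lt_m :=
  first [ exfalso; move: lt_m; rewrite !ltnS ?ltn0; done
        | destruct m as [|m]; [ | nat_cases m lt_m ] ].
Ltac ord_cases i :=
  let m := fresh "m" in let lt_m := fresh "lt_m" in case: i => m lt_m; nat_cases m lt_m.

Ltac pencil_entry :=
  rewrite !pencilE !struct_mxE /N1 /N2 /N3 /N4 /N5 /y1 /y2 /= !big_cons !big_nil !wedgeE /=;
  ring.

(* The diagonal entries of the chosen minor are all +-a (or all +-b), so the
   square of their product is a^(2r) whatever the signs. *)
Ltac pencil_minor r rows cols :=
  let coef_neq0 := fresh "coef_neq0" in
  move=> coef_neq0;
  apply: (@mxrank_trig_minor _ _ _ r (fun p => nth ord0 rows p) (fun p => nth ord0 cols p));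
  [ let p := fresh "p" in let q := fresh "q" in
    move=> p q; ord_cases p; ord_cases q => // _; pencil_entry
  | let k := eval compute in (2 * r)%N in
    apply: (@sqr_eq_expf_neq0 _ _ _ k _ coef_neq0);
    rewrite !big_ord_recr big_ord0 /=; pencil_entry ].

Lemma mxrank_pencil_N1_y2 (a b : C) : b != 0 -> (2 <= \rank (pencil N1 a b))%N.
Proof. pencil_minor 2%N [:: 'x 3; 'x 7] [:: 'x 7; 'x 3]. Qed.

Lemma mxrank_pencil_N2_y1 (a b : C) : a != 0 -> (4 <= \rank (pencil N2 a b))%N.
Proof. pencil_minor 4%N [:: 'x 2; 'x 7; 'x 4; 'x 5] [:: 'x 7; 'x 2; 'x 5; 'x 4]. Qed.

Lemma mxrank_pencil_N2_y2 (a b : C) : b != 0 -> (4 <= \rank (pencil N2 a b))%N.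
Proof. pencil_minor 4%N [:: 'x 1; 'x 3; 'x 6; 'x 7] [:: 'x 3; 'x 1; 'x 7; 'x 6]. Qed.

Lemma mxrank_pencil_N3_y1 (a b : C) : a != 0 -> (6 <= \rank (pencil N3 a b))%N.
Proof.
pencil_minor 6%N [:: 'x 1; 'x 2; 'x 3; 'x 5; 'x 6; 'x 7] [:: 'x 2; 'x 1; 'x 7; 'x 6; 'x 5; 'x 3].
Qed.

Lemma mxrank_pencil_N3_y2 (a b : C) : b != 0 -> (4 <= \rank (pencil N3 a b))%N.
Proof. pencil_minor 4%N [:: 'x 4; 'x 5; 'x 7; 'x 6] [:: 'x 6; 'x 7; 'x 5; 'x 4]. Qed.

Lemma mxrank_pencil_N4_y1 (a b : C) : a != 0 -> (6 <= \rank (pencil N4 a b))%N.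
Proof.
pencil_minor 6%N [:: 'x 1; 'x 2; 'x 4; 'x 5; 'x 6; 'x 7] [:: 'x 6; 'x 7; 'x 5; 'x 4; 'x 1; 'x 2].
Qed.

Lemma mxrank_pencil_N4_y2 (a b : C) : b != 0 -> (4 <= \rank (pencil N4 a b))%N.
Proof. pencil_minor 4%N [:: 'x 3; 'x 7; 'x 5; 'x 6] [:: 'x 7; 'x 3; 'x 6; 'x 5]. Qed.

Lemma mxrank_pencil_N5_y1 (a b : C) : a != 0 -> (6 <= \rank (pencil N5 a b))%N.
Proof.
pencil_minor 6%N [:: 'x 1; 'x 6; 'x 3; 'x 4; 'x 5; 'x 7] [:: 'x 7; 'x 5; 'x 4; 'x 3; 'x 6; 'x 1].
Qed.

Lemma mxrank_pencil_N5_y2 (a b : C) : b != 0 -> (6 <= \rank (pencil N5 a b))%N.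
Proof.
pencil_minor 6%N [:: 'x 2; 'x 5; 'x 3; 'x 7; 'x 4; 'x 6] [:: 'x 6; 'x 4; 'x 7; 'x 3; 'x 5; 'x 2].
Qed.

Lemma has_form_rank_N1_2 : has_form_rank N1 2.
Proof. exact: has_form_rank_y2 (mxrank_pencil_N1_y2 0 (oner_neq0 _)). Qed.

Lemma has_form_rank_N2_4 : has_form_rank N2 4.
Proof. exact: has_form_rank_y2 (mxrank_pencil_N2_y2 0 (oner_neq0 _)). Qed.

Lemma has_form_rank_N3_4 : has_form_rank N3 4.
Proof. exact: has_form_rank_y2 (mxrank_pencil_N3_y2 0 (oner_neq0 _)). Qed.

Lemma has_form_rank_N4_4 : has_form_rank N4 4.
Proof. exact: has_form_rank_y2 (mxrank_pencil_N4_y2 0 (oner_neq0 _)). Qed.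

Lemma not_has_form_rank_N2_2 : ~ has_form_rank N2 2.
Proof. by apply: (not_has_form_rank _ mxrank_pencil_N2_y1 mxrank_pencil_N2_y2). Qed.

Lemma not_has_form_rank_N3_2 : ~ has_form_rank N3 2.
Proof. by apply: (not_has_form_rank _ mxrank_pencil_N3_y1 mxrank_pencil_N3_y2). Qed.

Lemma not_has_form_rank_N4_2 : ~ has_form_rank N4 2.
Proof. by apply: (not_has_form_rank _ mxrank_pencil_N4_y1 mxrank_pencil_N4_y2). Qed.

Lemma not_has_form_rank_N5_2 : ~ has_form_rank N5 2.
Proof. by apply: (not_has_form_rank _ mxrank_pencil_N5_y1 mxrank_pencil_N5_y2). Qed.

Lemma not_has_form_rank_N5_4 : ~ has_form_rank N5 4.
Proof. by apply: (not_has_form_rank _ mxrank_pencil_N5_y1 mxrank_pencil_N5_y2). Qed.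

Lemma low_rank_span_N2_4 : low_rank_span N2 4.
Proof. exact: low_rank_span_basis. Qed.

Lemma not_low_rank_span_N3_4 : ~ low_rank_span N3 4.
Proof. by apply: (not_low_rank_span _ mxrank_pencil_N3_y1). Qed.

Lemma not_low_rank_span_N4_4 : ~ low_rank_span N4 4.
Proof. by apply: (not_low_rank_span _ mxrank_pencil_N4_y1). Qed.

Lemma radical_N4_y2 (u : 'rV[C]_9) : u *m struct_mx N4 y2 = 0 ->
  [/\ xcoord u 3 = 0, xcoord u 5 = 0, xcoord u 6 = 0 & xcoord u 7 = 0].
Proof.
move=> u0; have entry j : (u *m struct_mx N4 y2) 0 j = 0 by rewrite u0 mxE.
move: (entry ('x 3)) (entry ('x 5)) (entry ('x 6)) (entry ('x 7)).
rewrite !row_struct_mxE /N4 /y2 /= !big_cons !big_nil /= => e3 e5 e6 e7.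
split; apply/eqP; [rewrite -oppr_eq0 | | rewrite -oppr_eq0 | ]; apply/eqP;
  [rewrite -[RHS]e7 | rewrite -[RHS]e6 | rewrite -[RHS]e5 | rewrite -[RHS]e3]; ring.
Qed.

Lemma isotropic_radicals_N4_4 : isotropic_radicals N4 4.
Proof.
apply: (isotropic_radicals_of _ mxrank_pencil_N4_y1) => // u v.
move=> /radical_N4_y2 [_ u5 u6 u7] /radical_N4_y2 [_ v5 v6 v7].
rewrite struct_formE /N4 /y1 /= !big_cons !big_nil /= u5 u6 u7 v5 v6 v7; ring.
Qed.

Lemma not_isotropic_radicals_N3_4 : ~ isotropic_radicals N3 4.
Proof.
move/(_ (ecol y1) (ecol y2) (delta_mx 0 ('x 1)) (delta_mx 0 ('x 2))).
rewrite bform_ecol_y1 // bform_ecol_y2 //.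
have rk : \rank (pencil N3 0 1) = 4%N.
  by apply/eqP; rewrite eqn_leq mxrank_pencil_y2_le mxrank_pencil_N3_y2 ?oner_neq0.
have radical k : k \in [:: 'x 1; 'x 2] -> (delta_mx 0 k : 'rV_9) *m pencil N3 0 1 = 0.
  rewrite !inE => /orP[] /eqP -> ; apply/rowP => j;
  rewrite /pencil scale0r add0r scale1r row_struct_mxE /N3 /y2 /= !big_cons !big_nil;
  rewrite !xcoord_delta !mxE /=; ring.
move/(_ rk (radical _ (mem_head _ _)) (radical _ (mem_last _ _))) => x1_x2_isotropic.
have : (1 : C) = 0.
  rewrite -[RHS]x1_x2_isotropic /pencil scale1r scale0r addr0 struct_formE /N3 /y1 /=.
  by rewrite !big_cons !big_nil !xcoord_delta /=; ring.
by move/eqP; rewrite oner_eq0.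
Qed.

Theorem theorem3 : forall i j : 'I_5, i != j -> ~ isomorphic (N92 i) (N92 j).
Proof.
move=> i j ne_ij; wlog lt_ij : i j ne_ij / (i < j)%N.
  move=> gen; move: (ne_ij); rewrite neq_ltn => /orP[lt_ij | lt_ji]; first exact: gen.
  by move/isomorphic_sym; apply: gen lt_ji; rewrite eq_sym.
move: lt_ij {ne_ij}; ord_cases i; ord_cases j => // _; rewrite /N92 /=.
- exact: not_isomorphic_by (@has_form_rank_invariant 2) has_form_rank_N1_2 not_has_form_rank_N2_2.
- exact: not_isomorphic_by (@has_form_rank_invariant 2) has_form_rank_N1_2 not_has_form_rank_N3_2.
- exact: not_isomorphic_by (@has_form_rank_invariant 2) has_form_rank_N1_2 not_has_form_rank_N4_2.
- exact: not_isomorphic_by (@has_form_rank_invariant 2) has_form_rank_N1_2 not_has_form_rank_N5_2.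
- exact: not_isomorphic_by (@low_rank_span_invariant 4) low_rank_span_N2_4 not_low_rank_span_N3_4.
- exact: not_isomorphic_by (@low_rank_span_invariant 4) low_rank_span_N2_4 not_low_rank_span_N4_4.
- exact: not_isomorphic_by (@has_form_rank_invariant 4) has_form_rank_N2_4 not_has_form_rank_N5_4.
- move/isomorphic_sym.
  exact: not_isomorphic_by (@isotropic_radicals_invariant 4) isotropic_radicals_N4_4
    not_isotropic_radicals_N3_4.
- exact: not_isomorphic_by (@has_form_rank_invariant 4) has_form_rank_N3_4 not_has_form_rank_N5_4.
- exact: not_isomorphic_by (@has_form_rank_invariant 4) has_form_rank_N4_4 not_has_form_rank_N5_4.
Qed.
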